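(* Let $i,m,n\in\mathbb{N}_0$ with $m<n+i$, and let \[ \mathcal{F}_{i,m,n}=\{p(x)+x^i\ln(x)q(x):\ p\in\Pi_m,\ q\in\Pi_n\}, \] considered as functions on $(1,\infty)$. Then every nonzero $f\in\mathcal{F}_{i,m,n}$ has at most $2n+i$ distinct zeros in $(1,\infty)$. In particular, if $m=n+i-1$, every nonzero $f\in\mathcal{F}_{i,m,n}$ has fewer than $m+n+2$ distinct zeros in $(1,\infty)$.
   Context: $\Pi_n$ denotes the space of real polynomials of degree at most $n$. *)

From HB Require Import structures.
From mathcomp Require Import all_boot all_order all_algebra.
From mathcomp Require Import all_classical all_reals all_analysis.
Set Implicit Arguments. Unset Strict Implicit. Unset Printing Implicit Defensive.
Import Order.TTheory GRing.Theory Num.Theory.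
Local Open Scope ring_scope.

Definition inPi (R : realType) (k : nat) (p : {poly R}) : bool := (size p <= k.+1)%N.

Definition Ffun (R : realType) (i : nat) (p q : {poly R}) (x : R) : R :=
  p.[x] + x ^+ i * ln x * q.[x].

(* Write f = A + ln x * B with polynomials A and B = X^i q, and let l be the lowest
   exponent with A_l or B_l nonzero.  Then x^(l+1) (f / x^l)' = x f' - l f has the
   same shape, with coefficients ((k - l) A_k + B_k, (k - l) B_k): it loses the term
   x^l ln x (or x^l, if B_l = 0) and, by Rolle, at most one zero.  Give exponent k
   weight 1 if x^k or x^k ln x occurs, plus 1 if x^k ln x occurs; by induction f has
   fewer zeros than its weight, because x^l (a + b ln x) has at most one zero in
   (1, oo) and none unless a b < 0.  The condition "B_M <> 0 and A_M B_M >= 0" at the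
   top exponent M is preserved by the operator, which scales these coefficients by
   M - l > 0, and so saves one more zero.  For f in F_{i,m,n} we have A_(n+i) = 0, so
   the weight is at most i + 2n + 2 [B_(n+i) <> 0] and f has at most 2n + i zeros. *)
From HB Require Import structures.
From mathcomp Require Import all_boot all_order all_algebra.
From mathcomp Require Import all_classical all_reals all_analysis.
From mathcomp Require Import ring zify.
Set Implicit Arguments. Unset Strict Implicit. Unset ing Implicit Defensive.
Import Order.TTheory GRing.Theory Num.Theory.
Local Open Scope ring_scope.

Lemma poly_monomial (S : nzRingType) (A : {poly S}) l :
  (forall k, k != l -> A`_k = 0) -> A = A`_l *: 'X^l.
Proof.
move=> A_off; apply/polyP => k; rewrite coefZ coefXn.
by case: eqVneq => [->|/A_off ->]; rewrite ?mulr1 ?mulr0.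
Qed.

Section EulerOperator.
Variable R : realDomainType.
Implicit Types A B : {poly R}.

Definition eulerA (l : nat) A B := A^`() * 'X - l%:R *: A + B.
Definition eulerB (l : nat) B := B^`() * 'X - l%:R *: B.

Lemma coef_eulerA l A B k : (eulerA l A B)`_k = (k%:R - l%:R) * A`_k + B`_k.
Proof.
rewrite /eulerA coefD coefB coefMX coefZ mulrBl.
by case: k => [|k] /=; rewrite ?coef_deriv ?mulr_natl ?mul0r.
Qed.

Lemma coef_eulerB l B k : (eulerB l B)`_k = (k%:R - l%:R) * B`_k.
Proof.
rewrite /eulerB coefB coefMX coefZ mulrBl.
by case: k => [|k] /=; rewrite ?coef_deriv ?mulr_natl ?mul0r.
Qed.

Lemma size_eulerA M l A B : (size A <= M.+1)%N -> (size B <= M.+1)%N ->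
  (size (eulerA l A B) <= M.+1)%N.
Proof.
move=> /leq_sizeP sA /leq_sizeP sB; apply/leq_sizeP => k lt_Mk.
by rewrite coef_eulerA sA ?sB // mulr0 addr0.
Qed.

Lemma size_eulerB M l B : (size B <= M.+1)%N -> (size (eulerB l B) <= M.+1)%N.
Proof.
move=> /leq_sizeP sB; apply/leq_sizeP => k lt_Mk.
by rewrite coef_eulerB sB ?mulr0.
Qed.

Definition nzcoef A B k : bool := (A`_k != 0) || (B`_k != 0).
Definition coef_weight A B k : nat := nzcoef A B k + (B`_k != 0).
Definition weight M A B : nat := \sum_(k < M.+1) coef_weight A B k.
Definition top_nonneg M A B : bool := (B`_M != 0) && (0 <= A`_M * B`_M).

Lemma nzcoef_exists A B : (A != 0) || (B != 0) -> exists k, nzcoef A B k.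
Proof.
case/orP=> [A_neq0|B_neq0]; [exists (size A).-1 | exists (size B).-1];
  by rewrite /nzcoef -!lead_coefE lead_coef_eq0 ?A_neq0 ?B_neq0 ?orbT.
Qed.

Lemma nzcoef_le M A B k : (size A <= M.+1)%N -> (size B <= M.+1)%N ->
  nzcoef A B k -> (k <= M)%N.
Proof.
move=> sA sB; rewrite leqNgt; apply: contraL => lt_Mk.
by rewrite /nzcoef !nth_default ?eqxx ?(leq_trans sA) ?(leq_trans sB).
Qed.

Lemma weightD1 M A B l : (l <= M)%N ->
  weight M A B = (coef_weight A B l + \sum_(k < M.+1 | k != l :> nat) coef_weight A B k)%N.
Proof. by move=> le_lM; rewrite /weight (bigD1 (Ordinal (le_lM : l < M.+1)%N)). Qed.

Lemma nzcoef_euler_neq l A B k : k != l ->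
  nzcoef (eulerA l A B) (eulerB l B) k = nzcoef A B k.
Proof.
move=> neq_kl; have c_neq0 : k%:R - l%:R != 0 :> R by rewrite subr_eq0 eqr_nat.
rewrite /nzcoef coef_eulerA coef_eulerB mulf_eq0 (negbTE c_neq0) /=.
by case: (eqVneq B`_k 0) => [->|]; rewrite ?addr0 ?mulf_eq0 ?(negbTE c_neq0) ?orbT.
Qed.

Lemma coef_weight_euler_neq l A B k : k != l ->
  coef_weight (eulerA l A B) (eulerB l B) k = coef_weight A B k.
Proof.
move=> neq_kl; rewrite /coef_weight nzcoef_euler_neq // coef_eulerB.
by rewrite mulf_eq0 subr_eq0 eqr_nat (negbTE neq_kl).
Qed.

Lemma coef_weight_euler_eq l A B : nzcoef A B l ->
  (coef_weight (eulerA l A B) (eulerB l B) l).+1 = coef_weight A B l.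
Proof.
rewrite /coef_weight /nzcoef coef_eulerA coef_eulerB !subrr !mul0r add0r eqxx orbF => ->.
by case: (B`_l != 0).
Qed.

Lemma weight_euler M l A B : (l <= M)%N -> nzcoef A B l ->
  (weight M (eulerA l A B) (eulerB l B)).+1 = weight M A B.
Proof.
move=> le_lM nzl; rewrite !(weightD1 _ _ le_lM) -addSn coef_weight_euler_eq //.
by congr (_ + _)%N; apply: eq_bigr => k; apply: coef_weight_euler_neq.
Qed.

Lemma top_nonneg_euler M l A B : (l < M)%N ->
  top_nonneg M A B -> top_nonneg M (eulerA l A B) (eulerB l B).
Proof.
rewrite /top_nonneg coef_eulerA coef_eulerB -(ltr_nat R) -subr_gt0 => c_gt0.
case/andP=> BM_neq0 AB_ge0; rewrite mulf_eq0 (negbTE BM_neq0) gt_eqF //=.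
set c := (M%:R - l%:R) in c_gt0 *.
rewrite (_ : (c * A`_M + B`_M) * (c * B`_M) = c ^+ 2 * (A`_M * B`_M) + c * B`_M ^+ 2); last by ring.
by apply: addr_ge0; apply: mulr_ge0; rewrite ?sqr_ge0 // ltW.
Qed.

Lemma weight_XnM_le n i A q : (size A <= n + i)%N ->
  (weight (n + i) A ('X^i * q) <= i + 2 * n + 2 * top_nonneg (n + i) A ('X^i * q))%N.
Proof.
move=> /leq_sizeP A_hi; rewrite /weight big_ord_recr /=; apply: leq_add; last first.
  rewrite /coef_weight /nzcoef /top_nonneg A_hi // mul0r lexx eqxx andbT.
  by case: (_ != 0).
have cw_le2 k : (coef_weight A ('X^i * q) k <= 2)%N.
  by rewrite /coef_weight; case: nzcoef; case: (_ != 0).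
have cw_low k : (k < i)%N -> (coef_weight A ('X^i * q) k <= 1)%N.
  by move=> lt_ki; rewrite /coef_weight coefXnM lt_ki eqxx addn0 leq_b1.
rewrite addnC big_split_ord /=; apply: leq_add.
  apply: (@leq_trans (\sum_(k < i) 1)); first by apply: leq_sum => k _; apply: cw_low.
  by rewrite sum_nat_const card_ord muln1.
apply: (@leq_trans (\sum_(k < n) 2)); first by apply: leq_sum.
by rewrite sum_nat_const card_ord mulnC.
Qed.
End EulerOperator.

Section RolleZeros.
Variables (R : realType) (a : R) (f df : R -> R).
Hypothesis f_deriv : forall x, a < x -> is_derive x 1 f (df x).

Lemma rolle_path_zeros x (l : seq R) : a < x -> path <%R x l ->
  f x = 0 -> {in l, forall y, f y = 0} ->
  exists t, [/\ path <%R x t, size t = size l & {in t, forall y, df y = 0}].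
Proof.
elim: l x => [|y l IH] x ax /=; first by exists [::].
case/andP=> lt_xy path_y fx0 fl0.
have fy0 : f y = 0 by apply: fl0; rewrite mem_head.
have [t [path_t size_t dft0]] := IH y (lt_trans ax lt_xy) path_y fy0
  (fun z zl => fl0 z (@mem_behead _ (y :: l) _ zl)).
have f_der z : z \in `]x, y[ -> derivable f z 1.
  by rewrite in_itv /= => /andP[lt_xz _]; case: (f_deriv (lt_trans ax lt_xz)).
have f_cont := @derivable_within_continuous R R^o f `[x, y] (fun z zxy =>
  match f_deriv (lt_le_trans ax (andP zxy).1) with DeriveDef d _ => d end).
have [c] := Rolle lt_xy f_der f_cont (etrans fx0 (esym fy0)).
rewrite in_itv /= => /andP[lt_xc lt_cy] dfc0.
exists (c :: t); split => /=.
- rewrite lt_xc /=; move: path_t; rewrite !(path_sortedE lt_trans).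
  by case/andP=> /allP lt_yt ->; rewrite andbT; apply/allP => z /lt_yt; apply: lt_trans.
- by rewrite size_t.
- move=> z; rewrite inE => /predU1P[->|/dft0 //].
  have dfc := f_deriv (lt_trans ax lt_xc).
  by rewrite -(@derive_val _ _ _ _ _ _ _ dfc) (@derive_val _ _ _ _ _ _ _ dfc0).
Qed.

Lemma rolle_zeros (s : seq R) : uniq s -> {in s, forall x, a < x /\ f x = 0} ->
  exists t, [/\ uniq t, (size s <= (size t).+1)%N &
                {in t, forall x, a < x /\ df x = 0}].
Proof.
move=> uniq_s zs; have := sort_lt_sorted s; rewrite uniq_s.
have size_sort := size_sort <=%R s; have mem_sort := mem_sort <=%R s.
case: (sort <=%R s) size_sort mem_sort => [<- _ _|x l size_xl mem_xl sorted_xl].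
  by exists [::].
have [ax fx0] : a < x /\ f x = 0 by apply: zs; rewrite -mem_xl mem_head.
have fl0 : {in l, forall y, f y = 0}.
  by move=> y yl; apply: (zs y _).2; rewrite -mem_xl inE yl orbT.
have [t [path_t size_t dft0]] := rolle_path_zeros ax sorted_xl fx0 fl0.
move: path_t; rewrite (path_sortedE lt_trans) => /andP[/allP lt_xt sorted_t].
exists t; split.
- exact: (sorted_uniq lt_trans ltxx sorted_t).
- by rewrite -size_xl /= size_t.
- by move=> y yt; split; [apply: lt_trans (lt_xt y yt) | apply: dft0].
Qed.
End RolleZeros.

Section LnPoly.
Variable R : realType.
Implicit Types (A B : {poly R}) (x : R).

Definition lnpoly A B x : R := A.[x] + ln x * B.[x].

Lemma is_derive_lnpoly A B x : 0 < x ->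
  is_derive x 1 (lnpoly A B) (lnpoly A^`() B^`() x + B.[x] / x).
Proof.
move=> x_gt0; have := is_derive1_ln x_gt0.
rewrite (_ : lnpoly A B = horner A + (@ln R) * horner B); last exact/funext.
move=> ln_deriv; apply: is_derive_eq.
by rewrite /lnpoly /GRing.scale /=; ring.
Qed.

Lemma lnpoly_euler l A B x : x != 0 ->
  x * (lnpoly A^`() B^`() x + B.[x] / x) - l%:R * lnpoly A B x =
  lnpoly (eulerA l A B) (eulerB l B) x.
Proof. by move=> x_neq0; rewrite /lnpoly /eulerA /eulerB !hornerE; field. Qed.

Lemma is_derive_lnpoly_divXn l A B x : 0 < x ->
  is_derive x 1 (fun y => lnpoly A B y / y ^+ l)
    (lnpoly (eulerA l A B) (eulerB l B) x / x ^+ l.+1).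
Proof.
move=> x_gt0; have x_neq0 : x != 0 by rewrite gt_eqF.
have Xl_neq0 : ((@id R) ^+ l) x != 0 by rewrite exprfctE expf_neq0.
have dV := is_deriveV Xl_neq0 (is_deriveX l (is_derive_id x 1)).
have dG := is_derive_lnpoly A B x_gt0.
have -> : (fun y => lnpoly A B y / y ^+ l) =
          lnpoly A B * (fun y => (((@id R) ^+ l) y)^-1).
  by apply/funext => y; rewrite /= exprfctE.
apply: is_derive_eq; rewrite -(lnpoly_euler l A B x_neq0).
rewrite /GRing.scale /= mulr1 !exprfctE /=.
case: l {Xl_neq0 dV} => [|l]; first by rewrite !expr0 expr1; field.
by rewrite /= !exprS; field; rewrite x_neq0 expf_neq0.
Qed.

Lemma lnpoly_zeros_euler l A B s : uniq s ->
  {in s, forall x, 1 < x /\ lnpoly A B x = 0} ->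
  exists t, [/\ uniq t, (size s <= (size t).+1)%N &
    {in t, forall x, 1 < x /\ lnpoly (eulerA l A B) (eulerB l B) x = 0}].
Proof.
move=> uniq_s zs.
have deriv x : 1 < x -> is_derive x 1 (fun y => lnpoly A B y / y ^+ l)
    (lnpoly (eulerA l A B) (eulerB l B) x / x ^+ l.+1).
  by move=> x_gt1; apply: is_derive_lnpoly_divXn; apply: lt_trans x_gt1.
have zs_div : {in s, forall x, 1 < x /\ lnpoly A B x / x ^+ l = 0}.
  by move=> x /zs[x_gt1 ->]; rewrite mul0r.
have [t [uniq_t size_st zt]] := rolle_zeros deriv uniq_s zs_div.
exists t; split=> // x /zt[x_gt1 /eqP zero_div]; split=> //; apply/eqP.
have x_neq0 : x != 0 by rewrite gt_eqF // (lt_trans ltr01).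
by move: zero_div; rewrite mulf_eq0 invr_eq0 expf_eq0 (negbTE x_neq0) andbF orbF.
Qed.

Lemma ln_affine_zeros (a b : R) s : (a != 0) || (b != 0) -> uniq s ->
  {in s, forall x, 1 < x /\ a + ln x * b = 0} ->
  leq (size s) ((b != 0) && (a * b < 0)).
Proof.
move=> ab_neq0 uniq_s zs.
have root_sign x : x \in s -> (b != 0) && (a * b < 0).
  case/zs=> /ln_gt0 ln_gt0 root_x.
  have b_neq0 : b != 0.
    by apply: contraTneq ab_neq0 => b0; move: root_x; rewrite b0 mulr0 addr0 => ->; rewrite eqxx.
  have -> : a = - (ln x * b) by apply/eqP; rewrite -addr_eq0 root_x.
  by rewrite b_neq0 mulNr -mulrA -expr2 oppr_lt0 mulr_gt0 // exprn_even_gt0.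
have root_uniq x y : x \in s -> y \in s -> x = y.
  move=> xs ys; have /andP[b_neq0 _] := root_sign x xs.
  move: xs ys => /zs[x_gt1 root_x] /zs[y_gt1 root_y].
  apply: ln_inj; rewrite ?posrE ?(lt_trans ltr01) //.
  by apply: (mulIf b_neq0); apply: (addrI a); rewrite root_x root_y.
case: s uniq_s root_sign root_uniq {zs} => [//|x s] uniq_s root_sign root_uniq.
rewrite (root_sign x) ?mem_head //; apply: (uniq_leq_size (s2 := [:: x]) uniq_s).
by move=> y ys; rewrite (root_uniq y x ys (mem_head _ _)) mem_head.
Qed.

Lemma lnpoly_monomial l A B x : (forall k, k != l -> A`_k = 0 /\ B`_k = 0) ->
  lnpoly A B x = x ^+ l * (A`_l + ln x * B`_l).
Proof.
move=> AB_off; rewrite /lnpoly {1}(poly_monomial (fun k kl => (AB_off k kl).1)).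
rewrite {1}(poly_monomial (fun k kl => (AB_off k kl).2)) !hornerZ hornerXn.
by ring.
Qed.

Lemma lnpoly_zeros_monomial M l A B s : (l <= M)%N -> nzcoef A B l ->
  (forall k, k != l -> A`_k = 0 /\ B`_k = 0) ->
  uniq s -> {in s, forall x, 1 < x /\ lnpoly A B x = 0} ->
  (size s + top_nonneg M A B < weight M A B)%N.
Proof.
move=> le_lM nzl AB_off uniq_s zs.
have zs_l : {in s, forall x, 1 < x /\ A`_l + ln x * B`_l = 0}.
  move=> x /zs[x_gt1]; rewrite (lnpoly_monomial x AB_off) => /eqP zs_x; split=> //; apply/eqP.
  have x_neq0 : x != 0 by rewrite gt_eqF // (lt_trans ltr01).
  by move: zs_x; rewrite mulf_eq0 expf_eq0 (negbTE x_neq0) andbF.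
have := ln_affine_zeros nzl uniq_s zs_l.
have -> : weight M A B = coef_weight A B l.
  rewrite (weightD1 _ _ le_lM) big1 ?addn0 // => j /AB_off[Aj0 Bj0].
  by rewrite /coef_weight /nzcoef Aj0 Bj0 eqxx.
have top_l : top_nonneg M A B ==> (B`_l != 0) && (0 <= A`_l * B`_l).
  apply/implyP => /andP[BM_neq0 AB_ge0].
  have eq_Ml : M = l by apply/eqP; apply: contraNT BM_neq0 => /AB_off[_ ->].
  by rewrite -eq_Ml BM_neq0 AB_ge0.
move: top_l; rewrite /coef_weight nzl.
by case: lerP; case: top_nonneg; case: (B`_l != 0) => //=; lia.
Qed.

Lemma lnpoly_zeros_weight M A B s :
  (size A <= M.+1)%N -> (size B <= M.+1)%N -> (exists k, nzcoef A B k) ->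
  uniq s -> {in s, forall x, 1 < x /\ lnpoly A B x = 0} ->
  (size s + top_nonneg M A B < weight M A B)%N.
Proof.
move=> sA sB nzAB uniq_s zs; have [W ltW] := ubnP (weight M A B).
elim: W A B s ltW sA sB nzAB uniq_s zs => // W IH A B s ltW sA sB nzAB uniq_s zs.
have [l nzl l_min] := ex_minnP nzAB.
have le_lM := nzcoef_le sA sB nzl.
have [[k /andP[lt_lk nzk]]|no_higher] := pselect (exists k, (l < k)%N && nzcoef A B k).
  have lt_lM : (l < M)%N := leq_trans lt_lk (nzcoef_le sA sB nzk).
  have nz_euler : exists k, nzcoef (eulerA l A B) (eulerB l B) k.
    by exists k; rewrite nzcoef_euler_neq // gtn_eqF.
  have weight_euler := weight_euler le_lM nzl.
  have [t [uniq_t size_st zt]] := lnpoly_zeros_euler l uniq_s zs.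
  have := IH _ _ t _ (size_eulerA l sA sB) (size_eulerB l sB) nz_euler uniq_t zt.
  rewrite -ltnS weight_euler => /(_ ltW).
  case: (boolP (top_nonneg M A B)) => [/(top_nonneg_euler lt_lM) -> | _]; lia.
have AB_off k : k != l -> A`_k = 0 /\ B`_k = 0.
  move=> neq_kl; suff : ~~ nzcoef A B k by rewrite negb_or !negbK => /andP[/eqP-> /eqP->].
  apply/negP => nzk; case: ltngtP neq_kl => // [lt_kl|lt_lk] _.
    by have := l_min k nzk; rewrite leqNgt lt_kl.
  by apply: no_higher; exists k; rewrite lt_lk.
exact: lnpoly_zeros_monomial le_lM nzl AB_off uniq_s zs.
Qed.
End LnPoly.

Unset Implicit Arguments.

Theorem mainTheorem9 (R : realType) (i m n : nat) (p q : {poly R}) :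
  (m < n + i)%N -> inPi m p -> inPi n q ->
  (exists x : R, 1 < x /\ Ffun i p q x != 0) ->
  forall s : seq R, uniq s ->
    (forall x, x \in s -> 1 < x /\ Ffun i p q x = 0) ->
    (size s <= 2 * n + i)%N /\ (m = (n + i).-1 -> (size s < m + n + 2)%N).
Proof.
move=> lt_m_ni size_p size_q [x0 [x0_gt1 fx0_neq0]] s uniq_s zs.
have F_lnpoly x : Ffun i p q x = lnpoly p ('X^i * q) x.
  by rewrite /Ffun /lnpoly hornerM hornerXn mulrA [x ^+ i * _]mulrC.
have size_p' : (size p <= n + i)%N := leq_trans size_p lt_m_ni.
have size_Xq : (size ('X^i * q)%R <= (n + i).+1)%N.
  by apply: leq_trans (size_polyMleq _ _) _; move: size_q; rewrite size_polyXn /inPi /=; lia.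
have nz : (p != 0) || ('X^i * q != 0).
  apply: contraLR fx0_neq0; rewrite negb_or !negbK F_lnpoly => /andP[/eqP-> /eqP->].
  by rewrite /lnpoly !horner0 mulr0 addr0.
have zs' : {in s, forall x, 1 < x /\ lnpoly p ('X^i * q) x = 0}.
  by move=> x /zs; rewrite F_lnpoly.
have := lnpoly_zeros_weight (leqW size_p') size_Xq (nzcoef_exists nz) uniq_s zs'.
have := weight_XnM_le q size_p'.
move: (weight _ _ _) => w; case: top_nonneg => /= ? ?; split; lia.
Qed.
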